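(* Let $V:\mathbb{R}^d\to\mathbb{R}^n$ be continuously differentiable and $h$-homogeneous, and assume there are constants $c,s,r,C>0$ with $c\Vert\theta\Vert^s\le\Vert V(\theta)\Vert_\mu\le C\Vert\theta\Vert^r$ for all $\theta$. Let $B=\frac{\Vert (I-\gamma P)V^*\Vert_\mu}{1-\gamma}=\frac{\Vert R\Vert_\mu}{1-\gamma}$. Then for any initial condition $\theta(0)=\theta_0$, if $\theta(t)$ follows the dynamics $$\dot\theta=-\nabla V(\theta)^T A\,(V(\theta)-V^* ),$$ we have $\limsup_{t\to\infty}\Vert V(\theta(t))\Vert_\mu\le C(B/c)^{r/s}$.
   Context: A Markov reward process has finite state space $\mathcal{S}$ with $|\mathcal{S}|=n$, transition matrix $P$ (entries $P(s'|s)$) defining an irreducible, aperiodic Markov chain with stationary distribution $\mu$, a finite reward function $r(s,s')$, and discount factor $\gamma\in[0,1)$. Let $R\in\mathbb{R}^n$ be $R(s)=\mathbb{E}_{s'\sim P(\cdot|s)}[r(s,s')]$, and let $V^*\in\mathbb{R}^n$ be the unique solution of $V^*=R+\gamma PV^*$. Let $D_\mu$ be the diagonal matrix with $\mu$ on the diagonal and $A:=D_\mu(I-\gamma P)$. For $x\in\mathbb{R}^n$, $\Vert x\Vert_\mu^2=x^TD_\mu x$; $\Vert\theta\Vert$ is the Euclidean norm. $\nabla V(\theta)$ is the $n\times d$ Jacobian of $V$. A differentiable function $f:\mathbb{R}^k\to\mathbb{R}^m$ is called $h$-homogeneous (for $h\in\mathbb{R}$) if $f(x)=h\,\nabla f(x)\,x$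 for all $x$. *)

From HB Require Import structures.
From mathcomp Require Import all_boot all_order all_algebra.
From mathcomp Require Import all_classical all_reals all_analysis.
Set Implicit Arguments. Unset Strict Implicit. Unset Printing Implicit Defensive.
Import Order.TTheory GRing.Theory Num.Theory.
Import numFieldNormedType.Exports.
Local Open Scope ring_scope.

Section Defs.
Variable R : realType.

(* P is a stochastic matrix: P i j = P(j | i). *)
Definition stochastic (n : nat) (P : 'M[R]_n) : Prop :=
  (forall i j, 0 <= P i j) /\ (forall i, \sum_j P i j = 1).

Definition irreducible (n : nat) (P : 'M[R]_n) : Prop :=
  forall i j : 'I_n, exists k : nat, 0 < (P ^+ k) i j.

Definition aperiodic (n : nat) (P : 'M[R]_n) : Prop :=
  forall (i : 'I_n) (d : nat),
    (forall k : nat, (0 < k)%N -> 0 < (P ^+ k) i i -> (d %| k)%N) -> d = 1%N.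

Definition stationary_distribution (n : nat) (P : 'M[R]_n) (mu : 'rV[R]_n) : Prop :=
  (forall i, 0 <= mu 0 i) /\ \sum_i mu 0 i = 1 /\ mu *m P = mu.

Definition exp_reward (n : nat) (P : 'M[R]_n) (rw : 'I_n -> 'I_n -> R) : 'cV[R]_n :=
  \col_i \sum_j P i j * rw i j.

Definition Dmu (n : nat) (mu : 'rV[R]_n) : 'M[R]_n := diag_mx mu.

Definition Amat (n : nat) (mu : 'rV[R]_n) (gamma : R) (P : 'M[R]_n) : 'M[R]_n :=
  Dmu mu *m (1%:M - gamma *: P).

Definition mu_norm (n : nat) (mu : 'rV[R]_n) (x : 'cV[R]_n) : R :=
  Num.sqrt ((x^T *m Dmu mu *m x) 0 0).

Definition eucl_norm (d : nat) (x : 'cV[R]_d) : R :=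
  Num.sqrt (\sum_j x j 0 ^+ 2).

Definition jac (d n : nat) (V : 'cV[R]_d -> 'cV[R]_n) (theta : 'cV[R]_d) : 'M[R]_(n, d) :=
  \matrix_(i, j) ('d V theta (delta_mx j 0)) i 0.

Definition C1 (d n : nat) (V : 'cV[R]_d -> 'cV[R]_n) : Prop :=
  (forall theta, differentiable V theta) /\ continuous (jac V).

Definition homogeneous (d n : nat) (h : R) (V : 'cV[R]_d -> 'cV[R]_n) : Prop :=
  forall theta, V theta = h *: (jac V theta *m theta).

End Defs.

From HB Require Import structures.
From mathcomp Require Import all_boot all_order all_algebra.
From mathcomp Require Import all_classical all_reals all_analysis.
From mathcomp Require Import ring lra.
Import Order.TTheory GRing.Theory Num.Theory.
Import numFieldNormedType.Exports.
Set Implicit Arguments. Unset Strict Implicit.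
Local Open Scope classical_set_scope.
Local Open Scope ring_scope.

(* Along the flow, N t := |theta t|^2 has derivative -(2/h) V^T A (V - V* ), because
   homogeneity gives jac V theta *m theta = V theta / h.  As P is a contraction for |.|_mu
   when mu is stationary, V^T A (V - V* ) >= ((1 - gamma) |V|_mu^2 - |R|_mu^2 / (1 - gamma)) / 2,
   which is bounded away from 0 once |V|_mu >= B1 > B.  By the lower growth bound this holds
   outside the ball of radius rho with c rho^s = B1, so N decreases at a uniform rate outside
   that ball, hence theta eventually stays in it, and the upper growth bound gives
   |V|_mu <= C rho^r, which is as close to C (B/c)^(r/s) as we like. *)

Section mu_dot.
Variables (R : realType) (n : nat) (mu : 'rV[R]_n).

Definition mu_dot (x y : 'cV[R]_n) : R := \sum_i mu 0 i * x i 0 * y i 0.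

Lemma mu_dotE x y : (x^T *m Dmu mu *m y) 0 0 = mu_dot x y.
Proof.
rewrite /Dmu mul_mx_diag mxE; apply: eq_bigr => i _.
by rewrite !mxE [x i 0 * _]mulrC.
Qed.

Lemma mu_dotDr x y z : mu_dot x (y + z) = mu_dot x y + mu_dot x z.
Proof. by rewrite /mu_dot -big_split; apply: eq_bigr => i _; rewrite !mxE mulrDr. Qed.

Lemma mu_dotNr x y : mu_dot x (- y) = - mu_dot x y.
Proof. by rewrite /mu_dot -sumrN; apply: eq_bigr => i _; rewrite !mxE mulrN. Qed.

Lemma mu_dotBr x y z : mu_dot x (y - z) = mu_dot x y - mu_dot x z.
Proof. by rewrite mu_dotDr mu_dotNr. Qed.

Lemma mu_dotZr x y a : mu_dot x (a *: y) = a * mu_dot x y.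
Proof. by rewrite /mu_dot mulr_sumr; apply: eq_bigr => i _; rewrite !mxE; ring. Qed.

Lemma mu_norm_ge0 x : 0 <= mu_norm mu x.
Proof. exact: sqrtr_ge0. Qed.

Lemma mu_norm0 : mu_norm mu 0 = 0.
Proof. by rewrite /mu_norm mulmx0 mxE sqrtr0. Qed.

Hypothesis mu_ge0 : forall i, 0 <= mu 0 i.

Lemma mu_dot_ge0 x : 0 <= mu_dot x x.
Proof. by apply: sumr_ge0 => i _; rewrite -mulrA mulr_ge0 // -expr2 sqr_ge0. Qed.

Lemma mu_norm_sqr x : mu_norm mu x ^+ 2 = mu_dot x x.
Proof. by rewrite /mu_norm mu_dotE sqr_sqrtr // mu_dot_ge0. Qed.

Lemma mu_dot_young x y l : 0 < l -> 2 * mu_dot x y <= l * mu_dot x x + mu_dot y y / l.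
Proof.
move=> l_gt0; rewrite /mu_dot !mulr_sumr mulr_suml -big_split /=.
apply: ler_sum => i _; rewrite -subr_ge0.
have -> : l * (mu 0 i * x i 0 * x i 0) + mu 0 i * y i 0 * y i 0 / l
    - 2 * (mu 0 i * x i 0 * y i 0) = mu 0 i * ((l * x i 0 - y i 0) ^+ 2 / l).
  by field; rewrite gt_eqF.
by rewrite mulr_ge0 // divr_ge0 ?sqr_ge0 // ltW.
Qed.

(* 2 x_i x_j <= x_i^2 + x_j^2, and stationarity turns the weighted sum of the x_j^2
   back into mu_dot x x. *)
Lemma mu_dot_stochastic_le (P : 'M[R]_n) x :
  stochastic P -> mu *m P = mu -> mu_dot x (P *m x) <= mu_dot x x.
Proof.
move=> [P_ge0 P_sum1] muP.
pose w i j := mu 0 i * P i j.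
have rowsE : \sum_i \sum_j w i j * x i 0 ^+ 2 = mu_dot x x.
  apply: eq_bigr => i _.
  by rewrite -mulr_suml -mulr_sumr P_sum1 mulr1 -mulrA -expr2.
have colsE : \sum_i \sum_j w i j * x j 0 ^+ 2 = mu_dot x x.
  rewrite exchange_big; apply: eq_bigr => j _; rewrite -mulr_suml.
  have -> : \sum_i w i j = mu 0 j by rewrite -[in RHS]muP mxE.
  by rewrite -mulrA -expr2.
have crossE : mu_dot x (P *m x) = \sum_i \sum_j w i j * (x i 0 * x j 0).
  apply: eq_bigr => i _; rewrite mxE mulr_sumr.
  by apply: eq_bigr => j _; rewrite /w; ring.
rewrite -(ler_pM2l (ltr0n _ 2)) crossE mulr_sumr mulr2n mulrDl mul1r.
rewrite -{1}rowsE -colsE -big_split /=; apply: ler_sum => i _.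
rewrite mulr_sumr -big_split /=; apply: ler_sum => j _.
rewrite -subr_ge0.
have -> : w i j * x i 0 ^+ 2 + w i j * x j 0 ^+ 2 - 2 * (w i j * (x i 0 * x j 0))
    = w i j * (x i 0 - x j 0) ^+ 2 by ring.
by rewrite mulr_ge0 ?sqr_ge0 // mulr_ge0.
Qed.

End mu_dot.

Section Amat_form.
Variables (R : realType) (n : nat) (mu : 'rV[R]_n) (P : 'M[R]_n) (gamma : R).

Lemma Amat_formE u w :
  (u^T *m Amat mu gamma P *m w) 0 0 = mu_dot mu u w - gamma * mu_dot mu u (P *m w).
Proof.
rewrite /Amat mulmxA -(mulmxA _ _ w) mulmxBl mul1mx -scalemxAl mulmxBr.
by rewrite mxE [X in _ + X]mxE -scalemxAr [X in _ - X]mxE !mu_dotE.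
Qed.

Hypotheses (sP : stochastic P) (sm : stationary_distribution P mu).
Hypotheses (gamma_ge0 : 0 <= gamma) (gamma_lt1 : gamma < 1).

Lemma Amat_form_ge v Vs :
  ((1 - gamma) * mu_norm mu v ^+ 2
     - mu_norm mu (Vs - gamma *: (P *m Vs)) ^+ 2 / (1 - gamma)) / 2
  <= (v^T *m Amat mu gamma P *m (v - Vs)) 0 0.
Proof.
have [mu_ge0 [_ muP]] := sm.
set Rw := Vs - gamma *: (P *m Vs).
have -> : (v^T *m Amat mu gamma P *m (v - Vs)) 0 0
    = mu_dot mu v v - gamma * mu_dot mu v (P *m v) - mu_dot mu v Rw.
  by rewrite Amat_formE /Rw mulmxBr !mu_dotBr mu_dotZr; ring.
rewrite !mu_norm_sqr //.
have contr : gamma * mu_dot mu v (P *m v) <= gamma * mu_dot mu v v.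
  by rewrite ler_wpM2l // mu_dot_stochastic_le.
have young : 2 * mu_dot mu v Rw
    <= (1 - gamma) * mu_dot mu v v + mu_dot mu Rw Rw / (1 - gamma).
  by apply: mu_dot_young; rewrite // subr_gt0.
lra.
Qed.

End Amat_form.

Section eucl_norm.
Variables (R : realType) (d : nat).

Lemma mu_dot1E (x y : 'cV[R]_d) : mu_dot (const_mx 1) x y = (x^T *m y) 0 0.
Proof. by rewrite mxE; apply: eq_bigr => j _; rewrite !mxE mul1r. Qed.

Lemma eucl_norm_sqr (x : 'cV[R]_d) : eucl_norm x ^+ 2 = mu_dot (const_mx 1) x x.
Proof.
rewrite sqr_sqrtr; last by apply: sumr_ge0 => j _; exact: sqr_ge0.
by apply: eq_bigr => j _; rewrite mxE mul1r expr2.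
Qed.

Lemma eucl_norm_ge0 (x : 'cV[R]_d) : 0 <= eucl_norm x.
Proof. exact: sqrtr_ge0. Qed.

Lemma eucl_norm0 : eucl_norm (0 : 'cV[R]_d) = 0.
Proof. by rewrite /eucl_norm big1 ?sqrtr0 // => j _; rewrite mxE expr0n. Qed.

Lemma eucl_norm_gt0 (x : 'cV[R]_d) : x != 0 -> 0 < eucl_norm x.
Proof.
move=> x_neq0; rewrite sqrtr_gt0.
have [j xj_neq0] : exists j, x j 0 != 0.
  apply/not_existsP => x_eq0; move/eqP: x_neq0; apply; apply/matrixP => i k.
  by rewrite ord1 mxE; apply/eqP; apply: contra_notT (x_eq0 i).
rewrite (bigD1 j) //=; apply: ltr_wpDr; first by apply: sumr_ge0 => i _; exact: sqr_ge0.
by rewrite lt_def sqr_ge0 andbT sqrf_eq0.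
Qed.

End eucl_norm.

Section derive.
Variable R : realType.

Lemma is_derive_mx_entry k m (f : R -> 'M[R]_(k, m)) (t : R) df i j :
  is_derive t 1 f df -> is_derive t (1 : R) (fun u => f u i j) (df i j).
Proof.
move=> [f_derivable <-].
have entry_cvg : (fun h : R => h^-1 *: (f (h *: 1 + t) i j - f t i j)) @ 0^' --> ('D_1 f t) i j.
  have -> : (fun h : R => h^-1 *: (f (h *: 1 + t) i j - f t i j))
      = (fun M : 'M[R]_(k, m) => M i j) \o (fun h : R => h^-1 *: (f (h *: 1 + t) - f t)).
    by apply/funext => h /=; rewrite !mxE.
  by apply: continuous_cvg; [exact: coord_continuous | exact: f_derivable].
apply: DeriveDef; first by apply/cvg_ex; exists (('D_1 f t) i j).
exact: cvg_lim entry_cvg.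
Qed.

Lemma is_derive_mu_dot_sqr k (w : 'rV[R]_k) (f : R -> 'cV[R]_k) (t : R) df :
  is_derive t 1 f df ->
  is_derive t (1 : R) (fun u => mu_dot w (f u) (f u)) (2 * mu_dot w (f t) df).
Proof.
move=> f_derive.
have -> : (fun u => mu_dot w (f u) (f u)) = \sum_i (fun u => w 0 i * f u i 0 ^+ 2).
  by apply/funext => u; rewrite fct_sumE; apply: eq_bigr => i _; rewrite -mulrA -expr2.
rewrite /mu_dot mulr_sumr; apply: is_derive_sum => i.
have := is_derive_mx_entry i 0 f_derive.
have -> : (fun u => w 0 i * f u i 0 ^+ 2) = w 0 i *: (fun u => f u i 0) ^+ 2.
  by apply/funext => u /=; rewrite /GRing.scale /= exprfctE.
move=> entry_derive; apply: is_derive_eq.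
by rewrite /GRing.scale /= expr1; ring.
Qed.

Lemma diff_jacE d n (V : 'cV[R]_d -> 'cV[R]_n) y x : 'd V y x = jac V y *m x.
Proof.
rewrite {1}(matrix_sum_delta x) linear_sum /=.
apply/matrixP => i k; rewrite ord1 !mxE summxE; apply: eq_bigr => j _.
by rewrite big_ord1 linearZ /= !mxE mulrC.
Qed.

Lemma is_derive_ray d n (V : 'cV[R]_d -> 'cV[R]_n) x (t : R) :
  differentiable V (t *: x) -> is_derive t (1 : R) (fun u : R => V (u *: x)) ('d V (t *: x) x).
Proof.
move=> V_diff.
have quotE : (fun h : R => h^-1 *: (V ((h *: 1 + t) *: x) - V (t *: x)))
    = (fun h : R => h^-1 *: (V (h *: x + t *: x) - V (t *: x))).
  by apply/funext => h; rewrite scalerDl /GRing.scale /= mulr1.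
have V_derivable : derivable V (t *: x) x by exact: diff_derivable.
apply: DeriveDef; first by rewrite /derivable /= quotE.
by rewrite /derive /= quotE -deriveE.
Qed.

End derive.

Section homogeneous.
Variables (R : realType) (d n : nat) (h : R) (V : 'cV[R]_d -> 'cV[R]_n).
Hypothesis hom : homogeneous h V.

Lemma homogeneous0 : V 0 = 0.
Proof. by rewrite hom mulmx0 scaler0. Qed.

Lemma homogeneous_jac_mul y : h != 0 -> jac V y *m y = h^-1 *: V y.
Proof. by move=> h_neq0; rewrite hom scalerA mulVf // scale1r. Qed.

Hypothesis V_diff : forall y, differentiable V y.

Lemma is_derive_ray_sqr x (u : R) : h != 0 -> u != 0 ->
  is_derive u (1 : R) (fun u : R => eucl_norm (V (u *: x)) ^+ 2)
    (2 / (h * u) * eucl_norm (V (u *: x)) ^+ 2).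
Proof.
move=> h_neq0 u_neq0.
have -> : (fun u : R => eucl_norm (V (u *: x)) ^+ 2)
    = (fun u : R => mu_dot (const_mx 1) (V (u *: x)) (V (u *: x))).
  by apply/funext => v; rewrite eucl_norm_sqr.
apply: is_derive_eq; first exact/is_derive_mu_dot_sqr/is_derive_ray/V_diff.
have -> : 'd V (u *: x) x = (h * u)^-1 *: V (u *: x).
  rewrite diff_jacE [in RHS]hom -scalemxAr !scalerA -mulrA mulVf ?scale1r //.
  exact: mulf_neq0.
by rewrite mu_dotZr eucl_norm_sqr mulrA.
Qed.

(* If h < 0, the squared norm q u := |V (u x)|^2 solves q' = 2 q / (h u), so it does not
   increase on ]0, 1]; but q 1 > 0 = q 0 and q is continuous at 0. *)
Lemma homogeneous_degree_gt0 (x : 'cV[R]_d) :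
  (forall y : 'cV[R]_d, y != 0 -> V y != 0) -> x != 0 -> 0 < h.
Proof.
move=> V_neq0 x_neq0.
pose q u := eucl_norm (V (u *: x)) ^+ 2.
have q_gt0 u : u != 0 -> 0 < q u.
  by move=> u_neq0; rewrite exprn_gt0 // eucl_norm_gt0 // V_neq0 // scaler_eq0 negb_or u_neq0.
have q0 : q 0 = 0 by rewrite /q scale0r homogeneous0 eucl_norm0 expr0n.
have h_neq0 : h != 0.
  by apply: contraNneq (V_neq0 _ x_neq0) => h0; rewrite hom h0 scale0r.
rewrite lt_neqAle eq_sym h_neq0 /= leNgt; apply/negP => h_lt0.
have q_derivable u : derivable q u 1.
  rewrite /q; under eq_fun do rewrite eucl_norm_sqr.
  by have [] := is_derive_mu_dot_sqr (const_mx 1) (is_derive_ray (V_diff (u *: x))).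
have q_cont : continuous q.
  by move=> u; apply/differentiable_continuous/derivable1_diffP.
have q_nincr : {in `]0, 1] &, {homo q : u v /~ u <= v}}.
  apply: ler0_derive1_le_oc => [u _ | u | ]; [exact: q_derivable | | exact: continuous_subspaceT].
  rewrite in_itv /= => /andP[u_gt0 _].
  rewrite derive1E; have [_ ->] := is_derive_ray_sqr x h_neq0 (lt0r_neq0 u_gt0).
  rewrite pmulr_lle0 ?q_gt0 ?lt0r_neq0 // mulr_ge0_le0 // invr_le0 ltW //.
  by rewrite pmulr_llt0.
have q_lt_q1 : \forall u \near 0^'+, q u < q 1.
  by apply: cvgr_lt; [exact: cvg_at_right_filter (q_cont 0) | rewrite q0 q_gt0 ?oner_neq0].
have [u [[qu_lt u_gt0] u_le1]] : exists u, (q u < q 1 /\ 0 < u) /\ u <= 1.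
  apply: (filter_ex (F := (0 : R)^'+)); near=> v; split; [split|].
  - by near: v; exact: q_lt_q1.
  - by near: v; exact: nbhs_right_gt.
  - by apply: ltW; near: v; exact: nbhs_right_lt ltr01.
have := q_nincr 1 u; rewrite !in_itv /= u_gt0 u_le1 ltr01 lexx => /(_ isT isT isT).
by rewrite leNgt qu_lt.
Unshelve. all: by end_near.
Qed.

End homogeneous.

Section ode_comparison.
Variables (R : realType) (N N' : R -> R) (L k : R).
Hypotheses (k_gt0 : 0 < k) (N_ge0 : forall t, 0 <= N t).
Hypothesis N_derive : forall t : R, 0 < t -> is_derive t 1 N (N' t).
Hypothesis N'_le : forall t : R, 0 < t -> L < N t -> N' t <= - k.

Lemma ode_continuous_within a b : 0 < a -> {within `[a, b], continuous N}.
Proof.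
move=> a_gt0; apply: derivable_within_continuous => t; rewrite in_itv /= => /andP[a_le _].
by have [] := N_derive (lt_le_trans a_gt0 a_le).
Qed.

Lemma ode_decrease_above a b : 0 < a -> a < b -> (forall u, a < u < b -> L < N u) ->
  N b - N a <= - k * (b - a).
Proof.
move=> a_gt0 ab above.
have N_derive_in u : u \in `]a, b[ -> is_derive u 1 N (N' u).
  by rewrite in_itv /= => /andP[au _]; apply: N_derive; exact: lt_trans au.
have [xi xi_in ->] := MVT ab N_derive_in (ode_continuous_within a_gt0).
move: xi_in; rewrite in_itv /= => /andP[axi xib].
rewrite ler_pM2r ?subr_gt0 //; apply: N'_le; first exact: lt_trans axi.
by apply: above; rewrite axi xib.
Qed.

(* At a maximum point m of N on [a, b] with N m > L, N would still be decreasing just before m. *)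
Lemma ode_stays_below a b : 0 < a -> a <= b -> N a <= L -> N b <= L.
Proof.
move=> a_gt0 ab Na_le; rewrite leNgt; apply/negP => Nb_gt.
have [m m_in N_le_Nm] := EVT_max ab (ode_continuous_within a_gt0).
move: m_in; rewrite in_itv /= => /andP[am mb].
have Nm_gt : L < N m by apply: lt_le_trans Nb_gt (N_le_Nm b _); rewrite in_itv /= ab lexx.
have am_lt : a < m by rewrite lt_def am andbT; apply: contraTneq Nm_gt => ->; rewrite -leNgt.
have N_cont_m : N u @[u --> m] --> N m.
  apply: differentiable_continuous; apply/derivable1_diffP.
  by have [] := N_derive (lt_trans a_gt0 am_lt).
have [e [[e_gt0 e_lt] above]] : exists e, (0 < e /\ e < m - a) /\
    {in `[m - e, m + e], forall u, L < N u}.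
  apply: (filter_ex (F := (0 : R)^'+)); near=> e; split; [split|].
  - by near: e; exact: nbhs_right_gt.
  - by near: e; apply: nbhs_right_lt; rewrite subr_gt0.
  - by near: e; exact/at_right_in_segment/(cvgr_gt (N m) N_cont_m).
have me_gt0 : 0 < m - e by lra.
have decrease : N m - N (m - e) <= - k * (m - (m - e)).
  apply: ode_decrease_above => //; first by rewrite gtrBl.
  move=> u /andP[meu um]; apply: above; rewrite in_itv /= (ltW meu) /=.
  by rewrite (le_trans (ltW um)) // lerDl ltW.
have : N (m - e) <= N m by apply: N_le_Nm; rewrite in_itv /=; apply/andP; split; lra.
have : 0 < k * e by rewrite mulr_gt0.
lra.
Unshelve. all: by end_near.
Qed.

(* Otherwise N would decrease at rate k on ]1, T[, falling below 0 before T. *)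
Lemma ode_reaches_below : exists2 a, 1 <= a & N a <= L.
Proof.
have [//|never_below] := pselect (exists2 a, 1 <= a & N a <= L); exfalso.
have above u : 1 < u -> L < N u.
  move=> u_gt1; rewrite ltNge; apply/negP => Nu_le.
  by apply: never_below; exists u => //; exact: ltW.
set T := 2 + N 1 / k.
have Nk_ge0 : 0 <= N 1 / k by rewrite divr_ge0 // ltW.
have T_gt1 : 1 < T by rewrite /T; lra.
have : N T - N 1 <= - k * (T - 1).
  by apply: ode_decrease_above => // u /andP[u_gt1 _]; exact: above.
have -> : - k * (T - 1) = - k - N 1 by rewrite /T; field; rewrite gt_eqF.
rewrite lerD2r => NT_le.
by have := le_trans (N_ge0 T) NT_le; rewrite oppr_ge0 leNgt k_gt0.
Qed.

Lemma ode_eventually_below : \forall t \near +oo, N t <= L.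
Proof.
have [a a_ge1 Na_le] := ode_reaches_below.
near=> t; apply: (ode_stays_below (lt_le_trans ltr01 a_ge1) _ Na_le).
by near: t; apply: nbhs_pinfty_ge; rewrite num_real.
Unshelve. all: by end_near.
Qed.

End ode_comparison.

Lemma exists_radius_between (R : realType) (B c s r C eps : R) :
  0 <= B -> 0 < c -> 0 < s -> 0 < r -> 0 < C -> 0 < eps ->
  exists rho, [/\ 0 <= rho, B < c * rho `^ s & C * rho `^ r = C * (B / c) `^ (r / s) + eps].
Proof.
move=> B_ge0 c_gt0 s_gt0 r_gt0 C_gt0 eps_gt0.
set rho0 := (B / c) `^ s^-1.
have rho0_r : rho0 `^ r = (B / c) `^ (r / s) by rewrite /rho0 -powRrM [s^-1 * _]mulrC.
have rho0_s : rho0 `^ s = B / c.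
  by rewrite /rho0 -powRrM mulVf ?gt_eqF // powRr1 // divr_ge0 // ltW.
set rho := (rho0 `^ r + eps / C) `^ r^-1.
have rho_r : rho `^ r = rho0 `^ r + eps / C.
  by rewrite /rho -powRrM mulVf ?gt_eqF // powRr1 // addr_ge0 ?powR_ge0 // divr_ge0 // ltW.
exists rho; split; first exact: powR_ge0.
  have rho0_lt : rho0 < rho.
    rewrite ltNge; apply/negP => /(ge0_ler_powR (ltW r_gt0)).
    by rewrite !nnegrE !powR_ge0 rho_r => /(_ isT isT); rewrite gerDl leNgt divr_gt0.
  have -> : B = c * (B / c) by rewrite mulrC divfK ?gt_eqF.
  rewrite ltr_pM2l // -rho0_s.
  by apply: gt0_ltr_powR; rewrite ?nnegrE ?powR_ge0.
by rewrite rho_r -rho0_r mulrDr mulrCA divff ?gt_eqF // mulr1.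
Qed.

Section td_flow.
Variables (R : realType) (n d : nat) (P : 'M[R]_n) (mu : 'rV[R]_n) (gamma : R).
Variables (Vstar : 'cV[R]_n) (V : 'cV[R]_d -> 'cV[R]_n) (h : R) (theta : R -> 'cV[R]_d).
Hypotheses (sP : stochastic P) (sm : stationary_distribution P mu).
Hypotheses (gamma_ge0 : 0 <= gamma) (gamma_lt1 : gamma < 1).
Hypotheses (hom : homogeneous h V) (h_gt0 : 0 < h).
Hypothesis theta_derive : forall t : R, 0 < t -> is_derive t 1 theta
  (- ((jac V (theta t))^T *m Amat mu gamma P *m (V (theta t) - Vstar))).

Let A_form t := ((V (theta t))^T *m Amat mu gamma P *m (V (theta t) - Vstar)) 0 0.
Let B := mu_norm mu (Vstar - gamma *: (P *m Vstar)) / (1 - gamma).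

(* Homogeneity turns theta^T (jac V theta)^T into (V theta)^T / h. *)
Lemma is_derive_flow_sqr (t : R) : 0 < t ->
  is_derive t (1 : R) (fun u => eucl_norm (theta u) ^+ 2) (- (2 / h) * A_form t).
Proof.
move=> t_gt0; under eq_fun do rewrite eucl_norm_sqr.
apply: is_derive_eq; first exact: is_derive_mu_dot_sqr (theta_derive t_gt0).
rewrite mu_dot1E mulmxN mulmxA mulmxA -trmx_mul (homogeneous_jac_mul hom) ?gt_eqF //.
by rewrite linearZ /= -!scalemxAl 2![in LHS]mxE /A_form; ring.
Qed.

Lemma flow_sqr_derive_le (t : R) B1 : B <= B1 -> B1 <= mu_norm mu (V (theta t)) ->
  - (2 / h) * A_form t <= - ((1 - gamma) * (B1 ^+ 2 - B ^+ 2) / h).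
Proof.
move=> B_le B1_le.
have gamma1_gt0 : 0 < 1 - gamma by rewrite subr_gt0.
have B_ge0 : 0 <= B by rewrite divr_ge0 ?mu_norm_ge0 // ltW.
have Rw_normE : mu_norm mu (Vstar - gamma *: (P *m Vstar)) ^+ 2 / (1 - gamma)
    = (1 - gamma) * B ^+ 2 by rewrite /B; field; rewrite gt_eqF.
have sqr_le : B1 ^+ 2 <= mu_norm mu (V (theta t)) ^+ 2.
  by rewrite ler_sqr ?nnegrE ?mu_norm_ge0 // (le_trans B_ge0).
have := Amat_form_ge sP sm gamma_ge0 gamma_lt1 (V (theta t)) Vstar.
rewrite Rw_normE -/(A_form t) => A_form_ge.
have -> : (1 - gamma) * (B1 ^+ 2 - B ^+ 2) / h
    = 2 / h * ((1 - gamma) * (B1 ^+ 2 - B ^+ 2) / 2) by field; rewrite gt_eqF.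
rewrite mulNr lerN2 ler_pM2l ?divr_gt0 //.
apply: le_trans A_form_ge; rewrite ler_pM2r // -!mulrBr ler_pM2l //.
by rewrite lerD2r.
Qed.

Lemma flow_eventually_in_ball c s rho : 0 < c -> 0 <= s ->
  (forall th, c * eucl_norm th `^ s <= mu_norm mu (V th)) ->
  0 <= rho -> B < c * rho `^ s ->
  \forall t \near +oo, eucl_norm (theta t) <= rho.
Proof.
move=> c_gt0 s_ge0 V_ge rho_ge0 B_lt.
have B_ge0 : 0 <= B by rewrite divr_ge0 ?mu_norm_ge0 // subr_ge0 ltW.
have k_gt0 : 0 < (1 - gamma) * ((c * rho `^ s) ^+ 2 - B ^+ 2) / h.
  by rewrite !mulr_gt0 ?invr_gt0 ?subr_gt0 // ltr_pXn2r // nnegrE (le_trans B_ge0) // ltW.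
have N'_le u : 0 < u -> rho ^+ 2 < eucl_norm (theta u) ^+ 2 ->
    - (2 / h) * A_form u <= - ((1 - gamma) * ((c * rho `^ s) ^+ 2 - B ^+ 2) / h).
  rewrite ltr_sqr ?nnegrE ?eucl_norm_ge0 // => u_gt0 rho_lt.
  apply: flow_sqr_derive_le; first exact: ltW.
  apply: le_trans (V_ge _); rewrite ler_pM2l //.
  by apply: ge0_ler_powR; rewrite ?nnegrE ?eucl_norm_ge0 // ltW.
have := ode_eventually_below k_gt0 (fun u => sqr_ge0 (eucl_norm (theta u)))
  is_derive_flow_sqr N'_le.
by apply: filterS => t; rewrite ler_sqr ?nnegrE ?eucl_norm_ge0.
Qed.

End td_flow.

Theorem mainTheorem2 (R : realType) (n d : nat)
  (P : 'M[R]_n) (mu : 'rV[R]_n) (rw : 'I_n -> 'I_n -> R) (gamma : R)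
  (Vstar : 'cV[R]_n)
  (V : 'cV[R]_d -> 'cV[R]_n) (h c s r C : R)
  (theta : R -> 'cV[R]_d) :
  stochastic P -> irreducible P -> aperiodic P ->
  stationary_distribution P mu ->
  0 <= gamma -> gamma < 1 ->
  Vstar = exp_reward P rw + gamma *: (P *m Vstar) ->
  C1 V -> homogeneous h V ->
  0 < c -> 0 < s -> 0 < r -> 0 < C ->
  (forall th, c * eucl_norm th `^ s <= mu_norm mu (V th) /\
              mu_norm mu (V th) <= C * eucl_norm th `^ r) ->
  {within [set t : R | 0 <= t], continuous theta} ->
  (forall t : R, 0 < t ->
     is_derive t 1 theta (- ((jac V (theta t))^T *m Amat mu gamma P *m (V (theta t) - Vstar)))) ->
  let B := mu_norm mu (exp_reward P rw) / (1 - gamma) in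
  forall eps : R, 0 < eps ->
    \forall t \near +oo, mu_norm mu (V (theta t)) <= C * (B / c) `^ (r / s) + eps.
Proof.
move=> sP _ _ sm gamma_ge0 gamma_lt1 bellman [V_diff _] hom c_gt0 s_gt0 r_gt0 C_gt0
  bounds _ theta_derive B eps eps_gt0.
have rewardE : exp_reward P rw = Vstar - gamma *: (P *m Vstar).
  by rewrite {1}bellman addrK.
have B_ge0 : 0 <= B by rewrite divr_ge0 ?mu_norm_ge0 // subr_ge0 ltW.
have [[x x_neq0] | all0] := pselect (exists x : 'cV[R]_d, x != 0); last first.
  apply: nearW => t; have /eqP-> : theta t == 0.
    by apply: contra_notT all0 => theta_neq0; exists (theta t).
  by rewrite (homogeneous0 hom) mu_norm0 addr_ge0 ?mulr_ge0 ?powR_ge0 // ltW.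
have V_neq0 y : y != 0 -> V y != 0.
  move=> y_neq0; apply: contraTneq (proj1 (bounds y)) => ->.
  by rewrite mu_norm0 -ltNge mulr_gt0 // powR_gt0 // eucl_norm_gt0.
have h_gt0 := homogeneous_degree_gt0 hom V_diff V_neq0 x_neq0.
have [rho [rho_ge0 B_lt limE]] := exists_radius_between B_ge0 c_gt0 s_gt0 r_gt0 C_gt0 eps_gt0.
rewrite /B rewardE in B_lt.
have := flow_eventually_in_ball sP sm gamma_ge0 gamma_lt1 hom h_gt0 theta_derive
  c_gt0 (ltW s_gt0) (fun th => proj1 (bounds th)) rho_ge0 B_lt.
apply: filterS => t theta_le; rewrite -limE; apply: le_trans (proj2 (bounds _)) _.
by rewrite ler_pM2l // ge0_ler_powR ?nnegrE ?eucl_norm_ge0 // ltW.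
Qed.
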